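(* Let $G$ be a bipartite graph with colour classes of sizes $v$ and $w$, with $e$ edges, in which every vertex has degree at least $2$. Then the number of paths of length $3$ in $G$ is at least $e(e/v-1)(e/w-1)$, and this bound is attained exactly if all vertices of the first class have the same degree and all vertices of the second class have the same degree.
   Context: A path of length $3$ is a sequence of four distinct vertices $(x,y,z,t)$ with $\{x,y\},\{y,z\},\{z,t\}$ edges; a path and its reversal $(t,z,y,x)$ are counted as the same path (so the number of paths of length $3$ equals $\sum_{\{y,z\}\text{ edge}}(d(y)-1)(d(z)-1)$, $d$ denoting degree). *)

From HB Require Import structures.
From mathcomp Require Import all_boot all_order all_algebra.
Set Implicit Arguments. Unset Strict Implicit. Unset Printing Implicit Defensive.
Import Order.TTheory GRing.Theory Num.Theory.

Definition simple_graph (T : finType) (g : rel T) : Prop :=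
  symmetric g /\ irreflexive g.

(* A is one colour class of a bipartition: every edge has exactly one
   endpoint in A (the other class is ~: A). *)
Definition bipartition (T : finType) (g : rel T) (A : {set T}) : Prop :=
  forall x y, g x y -> (x \in A) != (y \in A).

Definition deg (T : finType) (g : rel T) (x : T) : nat := #|[set y | g x y]|.

Definition nedges (T : finType) (g : rel T) : nat :=
  #|[set E : {set T} | [exists x, exists y, g x y && (E == [set x; y])]]|.

Definition is_path3 (T : finType) (g : rel T) (x y z t : T) : bool :=
  [&& uniq [:: x; y; z; t], g x y, g y z & g z t].

(* number of paths of length 3, a path and its reversal counted once:
   the ordered paths come in reversal pairs (p <> rev p since vertices are
   distinct), so we halve the number of ordered ones. *)
Definition npaths3 (T : finType) (g : rel T) : nat :=
  #|[set p : T * T * T * T | is_path3 g p.1.1.1 p.1.1.2 p.1.2 p.2]| %/ 2.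

From HB Require Import structures.
From mathcomp Require Import all_boot all_order all_algebra.
From mathcomp Require Import ring lra.
From mathcomp Require Import classical_sets reals topology normedtype sequences derive exp Rstruct.
Set Implicit Arguments. Unset Strict Implicit. Unset Printing Implicit Defensive.
Import Order.TTheory GRing.Theory Num.Theory.
Import numFieldNormedType.Exports.
Local Open Scope ring_scope.

(* Classify the paths of length 3 by their middle edge yz: there are
   (d(y) - 1)(d(z) - 1) of them, so their number P is a sum of e terms, and
   AM-GM gives (P / e)^e >= prod_(yz) (d(y) - 1)(d(z) - 1).  That product is
   prod_(y in A) (d(y) - 1)^d(y) times the same product over the other class.
   Since u |-> (u + 1) ln u is convex on [1, +oo[, Jensen with u = d - 1 bounds
   the first factor below by (e/v - 1)^e and the second by (e/w - 1)^e.
   Equality in Jensen forces the degrees to be constant on each class, and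
   then all the terms of P are equal, so equality also holds in AM-GM. *)

Lemma mean_ge (F : numFieldType) (I : finType) (S : {pred I}) (u : I -> F) (c : F) :
  (0 < #|S|)%N -> {in S, forall i, c <= u i} -> c <= (\sum_(i in S) u i) / #|S|%:R.
Proof.
move=> S0 cu; rewrite ler_pdivlMr ?ltr0n // mulr_natr -sumr_const.
exact: ler_sum.
Qed.

Section Convexity.
Variable R : realType.
Local Open Scope classical_set_scope.

Lemma ln_lt_subr1 (x : R) : 0 < x -> x != 1 -> ln x < x - 1.
Proof.
move=> x0 x1; have lnx0 : ln x != 0 by rewrite ln_eq0.
by have := expR_gt1Dx lnx0; rewrite lnK ?posrE // ltrBrDl.
Qed.

(* With u = d - 1, phi u is the logarithm of (d - 1)^d. *)
Definition phi (u : R) := (u + 1) * ln u.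
Definition dphi (u : R) := ln u + 1 + u^-1.

Lemma is_derive_phi (u : R) : 0 < u -> is_derive u 1 phi (dphi u).
Proof.
move=> u0; have dln := is_derive1_ln u0.
apply: is_derive_eq; rewrite /dphi /GRing.scale /= addr0 mulr1 mulrDl mul1r mulfV ?gt_eqF //.
by rewrite addrC addrA.
Qed.

Lemma phi_MVT (a b : R) : 0 < a -> a < b ->
  exists2 c, a < c < b & phi b - phi a = dphi c * (b - a).
Proof.
move=> a0 ab.
have dphi_ab x : x \in `]a, b[%R -> is_derive x 1 phi (dphi x).
  by rewrite in_itv /= => /andP[ax _]; apply: is_derive_phi; lra.
have phi_cont : {within `[a, b], continuous phi}.
  apply: derivable_within_continuous => x; rewrite in_itv /= => /andP[ax _].
  by have [] := is_derive_phi (lt_le_trans a0 ax).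
by have [c] := MVT ab dphi_ab phi_cont; rewrite in_itv /=; exists c.
Qed.

Lemma dphi_lt (x y : R) : 1 <= x -> x < y -> dphi x < dphi y.
Proof.
move=> x1 xy; have x0 : 0 < x by lra.
have y0 : 0 < y by lra.
have : ln (x / y) < x / y - 1.
  by apply: ln_lt_subr1; rewrite ?divr_gt0 // lt_eqF // ltr_pdivrMr // mul1r.
rewrite ln_div ?posrE // /dphi => lnxy.
have : 0 <= y^-1 - x^-1 - (x / y - 1).
  have -> : y^-1 - x^-1 - (x / y - 1) = (x - 1) * (y - x) / (x * y).
    by field; rewrite ?gt_eqF.
  by rewrite divr_ge0 ?mulr_ge0 //; lra.
lra.
Qed.

Lemma phi_tangent_leif (m u : R) : 1 <= m -> 1 <= u ->
  phi m + dphi m * (u - m) <= phi u ?= iff (u == m).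
Proof.
move=> m1 u1; have m0 : 0 < m by lra.
have u0 : 0 < u by lra.
apply/leifP; have [um|mu|->] := ltgtP u m; last by rewrite subrr mulr0 addr0.
- have [c /andP[uc cm] eq_phi] := phi_MVT u0 um.
  have : dphi c < dphi m by apply: dphi_lt; lra.
  nra.
- have [c /andP[mc cu] eq_phi] := phi_MVT m0 mu.
  have : dphi m < dphi c by apply: dphi_lt.
  nra.
Qed.

Lemma forall_eq_meanE (I : finType) (S : {pred I}) (u : I -> R) : (0 < #|S|)%N ->
  [forall i in S, u i == (\sum_(j in S) u j) / #|S|%:R] =
  [forall i in S, forall j in S, u i == u j].
Proof.
move=> S0; apply/forall_inP/forall_inP => [mean_u i iS | const_u i iS].
  by apply/forall_inP => j jS; rewrite (eqP (mean_u i iS)) (eqP (mean_u j jS)).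
rewrite (eq_bigr (fun=> u i)) => [|j jS]; last by apply/esym/eqP/(forall_inP (const_u i iS)).
by rewrite sumr_const -[u i *+ _]mulr_natr mulfK // pnatr_eq0 -lt0n.
Qed.

Lemma jensen_phi (I : finType) (S : {pred I}) (u : I -> R) :
  (0 < #|S|)%N -> {in S, forall i, 1 <= u i} ->
  let m := (\sum_(i in S) u i) / #|S|%:R in
  #|S|%:R * phi m <= \sum_(i in S) phi (u i)
    ?= iff [forall i in S, forall j in S, u i == u j].
Proof.
move=> S0 u1 m; rewrite -forall_eq_meanE //.
have S0' : #|S|%:R != 0 :> R by rewrite pnatr_eq0 -lt0n.
have m1 : 1 <= m by apply: mean_ge.
have := leif_sum (fun i iS => phi_tangent_leif m1 (u1 i iS)).
congr (_ <= _ ?= iff _).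
rewrite big_split /= sumr_const -mulr_sumr sumrB sumr_const /m mulr_natl.
by rewrite -[X in _ - X]mulr_natr divfK // subrr mulr0 addr0 -mulr_natl.
Qed.

Lemma leif_mean_pow_prod (I : finType) (S : {pred I}) (d : I -> nat) :
  (0 < #|S|)%N -> {in S, forall i, 2 <= d i}%N ->
  let m : R := (\sum_(i in S) d i)%:R / #|S|%:R - 1 in
  m ^+ (\sum_(i in S) d i) <= \prod_(i in S) ((d i)%:R - 1) ^+ d i
    ?= iff [forall i in S, forall j in S, d i == d j].
Proof.
move=> S0 d2 m; set N := (\sum_(i in S) d i)%N.
have S0' : #|S|%:R != 0 :> R by rewrite pnatr_eq0 -lt0n.
pose u i : R := (d i)%:R - 1.
have u1 : {in S, forall i, 1 <= u i}.
  by move=> i /d2 d2i; rewrite /u lerBrDr (ler_nat R 2).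
have u0 i : i \in S -> 0 < u i by move=> /u1; lra.
have mE : m = (\sum_(i in S) u i) / #|S|%:R.
  by rewrite /m /u natr_sum sumrB sumr_const; field.
have m0 : 0 < m by rewrite mE; apply: lt_le_trans (mean_ge S0 u1); exact: ltr01.
have -> : m ^+ N = expR (#|S|%:R * phi m).
  have -> : #|S|%:R * phi m = N%:R * ln m.
    by rewrite /phi mulrA /m natr_sum; congr (_ * _); field.
  by rewrite expRM_natl lnK.
have -> : \prod_(i in S) ((d i)%:R - 1) ^+ d i = expR (\sum_(i in S) phi (u i)).
  rewrite expR_sum; apply: eq_bigr => i iS.
  by rewrite /phi /u subrK expRM_natl lnK ?posrE ?u0.
have -> : [forall i in S, forall j in S, d i == d j] =
          [forall i in S, forall j in S, u i == u j].
  apply: eq_forallb_in => i iS; apply: eq_forallb_in => j jS.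
  by rewrite /u (inj_eq (addIr _)) eqr_nat.
by rewrite (mono_leif (@ler_expR R)) mE; apply: jensen_phi.
Qed.

End Convexity.

Lemma leif_mean_pow_prod_rat (I : finType) (S : {pred I}) (d : I -> nat) :
  (0 < #|S|)%N -> {in S, forall i, 2 <= d i}%N ->
  let m : rat := (\sum_(i in S) d i)%:R / #|S|%:R - 1 in
  m ^+ (\sum_(i in S) d i) <= \prod_(i in S) ((d i)%:R - 1) ^+ d i
    ?= iff [forall i in S, forall j in S, d i == d j].
Proof.
move=> S0 d2 m; pose R := Rdefinitions.R.
suff : ratr (m ^+ (\sum_(i in S) d i)) <= ratr (\prod_(i in S) ((d i)%:R - 1) ^+ d i)
         ?= iff [forall i in S, forall j in S, d i == d j] :> R.
  by rewrite /Order.leif ler_rat (inj_eq (fmorph_inj _)).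
rewrite rmorphXn rmorph_prod rmorphB fmorph_div /= !ratr_nat rmorph1.
rewrite (eq_bigr (fun i => ((d i)%:R - 1) ^+ d i)) => [|i _].
  exact: leif_mean_pow_prod.
by rewrite rmorphXn rmorphB /= ratr_nat rmorph1.
Qed.

Section Indicators.
Variable T : finType.

Lemma sum_indicator (P : pred T) : (\sum_x (P x : nat))%N = #|P|.
Proof. by rewrite -sum1_card [RHS]big_mkcond; apply: eq_bigr => x _; rewrite unfold_in. Qed.

Lemma sum_indicator_pair (P Q : pred T) :
  (\sum_x \sum_t (P x && Q t : nat))%N = (#|P| * #|Q|)%N.
Proof.
under eq_bigr => x _ do under eq_bigr => t _ do rewrite -mulnb.
by rewrite -big_distrlr /= !sum_indicator.
Qed.

End Indicators.

Section BipartiteGraph.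
Variables (T : finType) (g : rel T) (A : {set T}).

Definition oriented_edges : {set T * T} := [set p | (p.1 \in A) && g p.1 p.2].

Lemma big_oriented_edges_fst (R : Type) (idx : R) (op : Monoid.com_law idx)
    (F : T -> T -> R) :
  \big[op/idx]_(p in oriented_edges) F p.1 p.2 =
  \big[op/idx]_(y in A) \big[op/idx]_(z | g y z) F y z.
Proof. by rewrite pair_big_dep; apply: eq_bigl => p; rewrite inE. Qed.

Hypotheses (g_sym : symmetric g) (g_irr : irreflexive g) (g_bip : bipartition g A).

Lemma bipartition_notin x y : g x y -> (x \in A) = (y \notin A).
Proof. by move/g_bip; case: (x \in A); case: (y \in A). Qed.

Lemma big_oriented_edges_snd (R : Type) (idx : R) (op : Monoid.com_law idx)
    (F : T -> T -> R) :
  \big[op/idx]_(p in oriented_edges) F p.1 p.2 =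
  \big[op/idx]_(z in ~: A) \big[op/idx]_(y | g z y) F y z.
Proof.
rewrite pair_big_dep (reindex_inj (can_inj swap_pairK)) /=.
apply: eq_bigl => -[z y]; rewrite !inE /= g_sym.
by case: (boolP (g z y)) => [/bipartition_notin ->|]; rewrite ?andbF // negbK.
Qed.

Lemma set2_sep_inj (a b c d : T) : a \in A -> b \notin A -> c \in A -> d \notin A ->
  [set a; b] = [set c; d] -> (a, b) = (c, d).
Proof.
move=> aA bA cA dA eq_ab_cd.
have : a \in [set c; d] by rewrite -eq_ab_cd set21.
have : b \in [set c; d] by rewrite -eq_ab_cd set22.
rewrite !in_set2 => /pred2P[bc|->] /pred2P[->|ad] //.
all: by [move: bA; rewrite bc cA | move: dA; rewrite -ad aA].
Qed.

Lemma nedges_oriented : nedges g = #|oriented_edges|.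
Proof.
rewrite /nedges -(@card_in_imset _ _ (fun p : T * T => [set p.1; p.2])).
  apply: eq_card => E; rewrite [in LHS]inE; apply/existsP/imsetP.
    move=> [x /existsP [y /andP [gxy /eqP ->]]].
    case xA: (x \in A); first by exists (x, y); rewrite // inE xA gxy.
    exists (y, x); last by rewrite /= finset.setUC.
    by rewrite inE /= g_sym gxy andbT -[y \in A]negbK -(bipartition_notin gxy) xA.
  move=> [[x y]]; rewrite inE /= => /andP [xA gxy] ->.
  by exists x; apply/existsP; exists y; rewrite gxy eqxx.
move=> [a b] [c d]; rewrite !inE /= => /andP [aA gab] /andP [cA gcd].
by apply: set2_sep_inj; rewrite // -?(bipartition_notin gab) -?(bipartition_notin gcd).
Qed.

Lemma card_oriented_edges_fst : #|oriented_edges| = (\sum_(y in A) deg g y)%N.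
Proof.
rewrite -sum1_card (big_oriented_edges_fst _ (fun _ _ => 1%N)).
by apply: eq_bigr => y _; rewrite sum1dep_card.
Qed.

Lemma card_oriented_edges_snd : #|oriented_edges| = (\sum_(z in ~: A) deg g z)%N.
Proof.
rewrite -sum1_card (big_oriented_edges_snd _ (fun _ _ => 1%N)).
by apply: eq_bigr => y _; rewrite sum1dep_card.
Qed.

Lemma prod_oriented_edges_fst (R : comRingType) (a : T -> R) :
  \prod_(p in oriented_edges) a p.1 = \prod_(y in A) a y ^+ deg g y.
Proof.
rewrite (big_oriented_edges_fst _ (fun y _ => a y)).
by apply: eq_bigr => y _; rewrite -prodr_const; apply: eq_bigl => z; rewrite inE.
Qed.

Lemma prod_oriented_edges_snd (R : comRingType) (a : T -> R) :
  \prod_(p in oriented_edges) a p.2 = \prod_(z in ~: A) a z ^+ deg g z.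
Proof.
rewrite (big_oriented_edges_snd _ (fun _ z => a z)).
by apply: eq_bigr => y _; rewrite -prodr_const; apply: eq_bigl => z; rewrite inE.
Qed.

Lemma is_path3E x y z t :
  is_path3 g x y z t = [&& g y z, g y x && (x != z) & g z t && (t != y)].
Proof.
have adj_neq u v : g u v -> (u == v) = false.
  by move=> guv; apply: contraTF guv => /eqP ->; rewrite g_irr.
rewrite /is_path3 /= !inE [g y x]g_sym.
case gxy: (g x y); case gyz: (g y z); case gzt: (g z t); rewrite /= ?andbF //=.
have -> : (x == t) = false.
  apply/negbTE/eqP => xt; subst t.
  move: (bipartition_notin gxy) (bipartition_notin gyz) (bipartition_notin gzt).
  by case: (x \in A); case: (y \in A); case: (z \in A).
rewrite (adj_neq _ _ gxy) (adj_neq _ _ gyz) (adj_neq _ _ gzt) /=.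
by rewrite orbF !andbT [t == y]eq_sym.
Qed.

Lemma card_neighbours_but y z : g y z -> #|[pred x | g y x && (x != z)]| = (deg g y).-1.
Proof.
move=> gyz; rewrite /deg (cardsD1 z) inE gyz /=.
by apply: eq_card => x; rewrite !inE andbC.
Qed.

Lemma card_path3 :
  #|[set p : T * T * T * T | is_path3 g p.1.1.1 p.1.1.2 p.1.2 p.2]| =
  (\sum_y \sum_(z | g y z) (deg g y).-1 * (deg g z).-1)%N.
Proof.
rewrite -sum_indicator.
under eq_bigr => p _ do rewrite [_ p]inE.
have -> : (\sum_(p : T * T * T * T) is_path3 g p.1.1.1 p.1.1.2 p.1.2 p.2 =
           \sum_x \sum_y \sum_z \sum_t is_path3 g x y z t)%N by rewrite !pair_bigA.
rewrite exchange_big /=; apply: eq_bigr => y _.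
rewrite exchange_big /= [RHS]big_mkcond /=; apply: eq_bigr => z _.
under eq_bigr => x _ do under eq_bigr => t _ do rewrite is_path3E.
case: (boolP (g y z)) => [gyz | _]; last by rewrite big1 // => x _; rewrite big1.
rewrite sum_indicator_pair (card_neighbours_but gyz) card_neighbours_but //.
by rewrite g_sym.
Qed.

Lemma npaths3E :
  npaths3 g = (\sum_(p in oriented_edges) (deg g p.1).-1 * (deg g p.2).-1)%N.
Proof.
rewrite /npaths3 card_path3 (bigID (mem A)) /=.
rewrite [X in (_ + X)%N](eq_bigl (mem (~: A))) => [|y]; last by rewrite !inE.
rewrite -(big_oriented_edges_fst _ (fun y z => (deg g y).-1 * (deg g z).-1)%N).
rewrite -(big_oriented_edges_snd _ (fun y z => (deg g z).-1 * (deg g y).-1)%N).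
under [X in (_ + X)%N]eq_bigr => p _ do rewrite mulnC.
by rewrite addnn -mul2n mulKn.
Qed.

End BipartiteGraph.

Lemma forall_in2_eqP (T : finType) (S : {pred T}) (f : T -> nat) :
  reflect {in S &, forall x y, f x = f y} [forall x in S, forall y in S, f x == f y].
Proof.
apply: (iffP forall_inP) => [const x y xS yS | const x xS].
  exact/eqP/(forall_inP (const x xS)).
by apply/forall_inP => y yS; rewrite (const x y).
Qed.

Section PathCount.
Variables (T : finType) (g : rel T) (A : {set T}).
Hypotheses (g_simple : simple_graph g) (g_bip : bipartition g A).
Hypothesis deg_ge2 : forall x, (2 <= deg g x)%N.

Local Notation E := (oriented_edges g A).

Lemma oriented_edges_gt0 (x : T) : (0 < #|E|)%N.
Proof.
have [g_sym _] := g_simple.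
case xA: (x \in A).
  rewrite card_oriented_edges_fst (bigD1 x) //=.
  exact: leq_trans (ltnW (deg_ge2 x)) (leq_addr _ _).
rewrite (card_oriented_edges_snd g_sym g_bip) (bigD1 x) ?inE ?xA //=.
exact: leq_trans (ltnW (deg_ge2 x)) (leq_addr _ _).
Qed.

Lemma deg_predn_gt0 x : 0 < (deg g x)%:R - 1 :> rat.
Proof. by rewrite subr_gt0 ltr1n deg_ge2. Qed.

Lemma mean_deg_predn_ge1 (S : {set T}) :
  (0 < #|S|)%N -> 1 <= (\sum_(x in S) deg g x)%:R / #|S|%:R - 1 :> rat.
Proof.
move=> S0; rewrite lerBrDr natr_sum.
by apply: mean_ge => // x _; rewrite (ler_nat _ 2).
Qed.

Lemma oriented_edges_sides_gt0 : (0 < #|E|)%N -> (0 < #|A|)%N /\ (0 < #|~: A|)%N.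
Proof.
move=> /card_gt0P[[x y]]; rewrite inE /= => /andP[xA gxy].
split; apply/card_gt0P; first by exists x.
by exists y; rewrite inE -(bipartition_notin g_bip gxy).
Qed.

Lemma mean_deg_sides_ge1 : (0 < #|E|)%N ->
  1 <= #|E|%:R / #|A|%:R - 1 :> rat /\ 1 <= #|E|%:R / #|~: A|%:R - 1 :> rat.
Proof.
move=> /oriented_edges_sides_gt0[A0 B0]; have [g_sym _] := g_simple.
rewrite {1}card_oriented_edges_fst (card_oriented_edges_snd g_sym g_bip).
by split; apply: mean_deg_predn_ge1.
Qed.

Lemma leif_prod_oriented_edges : (0 < #|E|)%N ->
  let mA : rat := #|E|%:R / #|A|%:R - 1 in
  let mB : rat := #|E|%:R / #|~: A|%:R - 1 in
  (mA * mB) ^+ #|E| <= \prod_(p in E) (((deg g p.1)%:R - 1) * ((deg g p.2)%:R - 1))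
    ?= iff [forall x in A, forall y in A, deg g x == deg g y]
        && [forall x in ~: A, forall y in ~: A, deg g x == deg g y].
Proof.
move=> E0 mA mB; have [g_sym _] := g_simple.
have [A0 B0] := oriented_edges_sides_gt0 E0.
have [mA1 mB1] := mean_deg_sides_ge1 E0.
have degA := leif_mean_pow_prod_rat A0 (fun z _ => deg_ge2 z).
have degB := leif_mean_pow_prod_rat B0 (fun z _ => deg_ge2 z).
rewrite -card_oriented_edges_fst in degA.
rewrite -(card_oriented_edges_snd g_sym g_bip) in degB.
have := leif_pM (exprn_ge0 _ (le_trans ler01 mA1)) (exprn_ge0 _ (le_trans ler01 mB1)) degA degB.
pose a x : rat := (deg g x)%:R - 1.
rewrite big_split /= (prod_oriented_edges_fst g A a) (prod_oriented_edges_snd g_sym g_bip a).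
have prod_neq0 (S : {set T}) : \prod_(z in S) a z ^+ deg g z != 0.
  by apply/prodf_neq0 => z _; rewrite expf_neq0 // gt_eqF ?deg_predn_gt0.
by rewrite exprMn (negbTE (mulf_neq0 (prod_neq0 _) (prod_neq0 _))).
Qed.

Lemma leif_npaths3 : (0 < #|E|)%N ->
  let n : rat := #|E|%:R in
  n * (n / #|A|%:R - 1) * (n / #|~: A|%:R - 1) <= (npaths3 g)%:R
    ?= iff [forall x in A, forall y in A, deg g x == deg g y]
        && [forall x in ~: A, forall y in ~: A, deg g x == deg g y].
Proof.
move=> E0 n; have [g_sym g_irr] := g_simple.
have [mA1 mB1] := mean_deg_sides_ge1 E0.
pose a x : rat := (deg g x)%:R - 1.
have a_ge0 x : 0 <= a x by apply/ltW/deg_predn_gt0.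
have P_E : (npaths3 g)%:R = \sum_(p in E) a p.1 * a p.2.
  rewrite (npaths3E g_sym g_irr g_bip) natr_sum; apply: eq_bigr => p _.
  by rewrite natrM -!subn1 !natrB ?(ltnW (deg_ge2 _)).
have AGM := @leif_AGM _ _ E _ (fun p _ => mulr_ge0 (a_ge0 p.1) (a_ge0 p.2)).
have := leif_trans (leif_prod_oriented_edges E0) AGM.
rewrite -P_E (mono_in_leif (ler_pXn2r E0)) ?nnegrE ?divr_ge0 ?mulr_ge0 ?ler0n //; last 2 first.
- exact: le_trans ler01 mA1.
- exact: le_trans ler01 mB1.
have n0 : 0 < n by rewrite ltr0n.
rewrite -(mono_leif (ler_pM2l n0)) /n mulrA [_ * (_ / _)]mulrC divfK ?gt_eqF //.
rewrite andb_idr // => /andP[/forall_inP constA /forall_inP constB].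
have sides p : p \in E -> (p.1 \in A) && (p.2 \in ~: A).
  by rewrite !inE => /andP[p1A /(bipartition_notin g_bip) <-]; rewrite p1A.
apply/forall_inP => p /sides/andP[p1A p2B]; apply/forall_inP => q /sides/andP[q1A q2B].
by rewrite /a (eqP (forall_inP (constA _ p1A) _ q1A)) (eqP (forall_inP (constB _ p2B) _ q2B)).
Qed.

End PathCount.

Theorem corollary4p6 (T : finType) (g : rel T) (A : {set T})
  (Hg : simple_graph g) (HA : bipartition g A)
  (Hdeg : forall x : T, (2 <= deg g x)%N) :
  let v : rat := (#|A|)%:R in
  let w : rat := (#|~: A|)%:R in
  let e : rat := (nedges g)%:R in
  e * (e / v - 1) * (e / w - 1) <= (npaths3 g)%:R /\
  ((npaths3 g)%:R = e * (e / v - 1) * (e / w - 1) <->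
     (forall x y, x \in A -> y \in A -> deg g x = deg g y) /\
     (forall x y, x \notin A -> y \notin A -> deg g x = deg g y)).
Proof.
move=> v w e; rewrite {}/v {}/w {}/e.
have [g_sym _] := Hg.
rewrite (nedges_oriented g_sym HA).
have [x0 _ | T0] := pickP (@predT T); last first.
  have T_empty (x : T) : False by have := T0 x.
  have -> : #|oriented_edges g A| = 0%N by apply: eq_card0 => p; case: (T_empty p.1).
  have -> : npaths3 g = 0%N by rewrite /npaths3 eq_card0 // => p; case: (T_empty p.2).
  by rewrite !mul0r; split=> //; split=> // _; split=> x; case: (T_empty x).
have [le_P eq_P] := leif_npaths3 Hg HA Hdeg (oriented_edges_gt0 Hg HA Hdeg x0).
split=> //; rewrite (rwP eqP) eq_sym eq_P.
split=> [/andP[/forall_in2_eqP constA /forall_in2_eqP constB] | [constA constB]].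
  by split=> // x y xA yA; apply: constB; rewrite inE.
apply/andP; split; apply/forall_in2_eqP => // x y; rewrite !inE; exact: constB.
Qed.
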